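(* Let $\mathcal G$ be a topological $2$-group, $X$ a topological space, $\mathcal U=\{U_i\}_{i\in I}$ an open cover of $X$, and let $c,c'$ be $\mathcal G$-valued Čech cocycles subordinate to $\mathcal U$. Then $c$ and $c'$ are cohomologous if and only if there is a $\mathcal G$-bundle morphism between $\pi_c$ and $\pi_{c'}$.
   Context: Notation: topological $2$-groups $\mathcal G=(\mathcal G_1\rightrightarrows\mathcal G_0)$ (groupoids internal to topological groups, product $g*h=h1_{t(g)^{-1}}g$), $\mathcal E=\mathrm{Ker}(s)$ with ${}^xe=1_xe1_{x^{-1}}$; $U_{i_1\cdots i_n}=U_{i_1}\cap\dots\cap U_{i_n}$. A $\mathcal G$-valued Čech cocycle subordinate to $\mathcal U$ is $c=(\mathbf x,\mathbf e)$, $\mathbf x_{ij}\colon U_{ij}\to\mathcal G_0$, $\mathbf e_{ijk}\colon U_{ijk}\to\mathcal E$ continuous, with $t(\mathbf e_{ijk})\mathbf x_{ij}\mathbf x_{jk}=\mathbf x_{ik}$ and $\mathbf e_{ikl}\mathbf e_{ijk}=\mathbf e_{ijl}\,{}^{\mathbf x_{ij}}\mathbf e_{jkl}$. Cocycles $(\mathbf x,\mathbf e)$, $(\mathbf x',\mathbf e')$ are cohomologous if there are continuous $a_i\colon U_i\to\mathcal G_0$, $d_{ij}\colon U_{ij}\to\mathcal E$ with $\mathbf x'_{ij}=a_it(d_{ij})\mathbf x_{ij}a_j^{-1}$ on $U_{ij}$ and $\mathbf e'_{ijk}={}^{a_i}\bigl(d_{ik}\mathbf e_{ijk}\,{}^{\mathbf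 x_{ij}}(d_{jk}^{-1})d_{ij}^{-1}\bigr)$ on $U_{ijk}$. To a cocycle $c$ is associated the principal $\mathcal G$-bundle $\pi_c\colon P_c\to\overline X$: $P_0=\coprod_iU_i\times\mathcal G_0$, $P_1=\coprod_{i,j}U_{ij}\times\mathcal G_1$, $s((v,g)_{ij})=(v,s(g))_i$, $t((v,g)_{ij})=(v,\mathbf x_{ij}(v)^{-1}t(g))_j$, $(v,g)_{ij}*(v,h)_{jk}=(v,\mathbf e_{ijk}(v)(g*(1_{\mathbf x_{ij}(v)}h)))_{ik}$, right $\mathcal G$-action by right multiplication in the second coordinate, $\pi_c$ the projection to $X$ ($\overline X=(X\rightrightarrows X)$). A $\mathcal G$-bundle morphism from $\pi\colon P\to\overline X$ to $\pi'\colon P'\to\overline X$ is a $\mathcal G$-equivariant continuous functor $f\colon P\to P'$ with $\pi'f=\pi$. *)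

From HB Require Import structures.
From mathcomp Require Import all_boot all_algebra.
From mathcomp Require Import all_classical all_reals all_analysis.

Set Implicit Arguments.
Unset Strict Implicit.
Unset Printing Implicit Defensive.

Local Open Scope classical_set_scope.

Record isTopGroup (G : topologicalType) (mul : G -> G -> G) (inv : G -> G)
    (one : G) : Prop := {
  tg_assoc : forall x y z, mul x (mul y z) = mul (mul x y) z;
  tg_mul1g : forall x, mul one x = x;
  tg_mulg1 : forall x, mul x one = x;
  tg_mulVg : forall x, mul (inv x) x = one;
  tg_mulgV : forall x, mul x (inv x) = one;
  tg_mul_cont : continuous (fun p : G * G => mul p.1 p.2);
  tg_inv_cont : continuous inv }.

Definition is_hom (G H : Type) (mG : G -> G -> G) (mH : H -> H -> H)
  (f : G -> H) : Prop := forall x y, f (mG x y) = mH (f x) (f y).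

(* Arrows of G1 go from (src g) to (tgt g); composition is written in  *)
(* diagrammatic order: comp g h = g * h is defined when tgt g = src h. *)

Record TwoGroup := {
  G0 : topologicalType;
  G1 : topologicalType;
  m0 : G0 -> G0 -> G0;  i0 : G0 -> G0;  e0 : G0;
  m1 : G1 -> G1 -> G1;  i1 : G1 -> G1;  e1 : G1;
  src : G1 -> G0;
  tgt : G1 -> G0;
  idm : G0 -> G1;
  comp : G1 -> G1 -> G1;
  ginv : G1 -> G1;
  G0_topgroup : isTopGroup m0 i0 e0;
  G1_topgroup : isTopGroup m1 i1 e1;
  src_idm : forall x, src (idm x) = x;
  tgt_idm : forall x, tgt (idm x) = x;
  src_comp : forall g h, tgt g = src h -> src (comp g h) = src g;
  tgt_comp : forall g h, tgt g = src h -> tgt (comp g h) = tgt h;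
  comp_idml : forall g, comp (idm (src g)) g = g;
  comp_idmr : forall g, comp g (idm (tgt g)) = g;
  compA : forall f g h, tgt f = src g -> tgt g = src h ->
    comp (comp f g) h = comp f (comp g h);
  src_ginv : forall g, src (ginv g) = tgt g;
  tgt_ginv : forall g, tgt (ginv g) = src g;
  comp_ginvr : forall g, comp g (ginv g) = idm (src g);
  comp_ginvl : forall g, comp (ginv g) g = idm (tgt g);
  src_hom : is_hom m1 m0 src;
  tgt_hom : is_hom m1 m0 tgt;
  idm_hom : is_hom m0 m1 idm;
  ginv_hom : is_hom m1 m1 ginv;
  comp_hom : forall g g' h h', tgt g = src h -> tgt g' = src h' ->
    comp (m1 g g') (m1 h h') = m1 (comp g h) (comp g' h');
  src_cont : continuous src;
  tgt_cont : continuous tgt;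
  idm_cont : continuous idm;
  ginv_cont : continuous ginv;
  comp_cont : {within [set p : G1 * G1 | tgt p.1 = src p.2],
                continuous (fun p : G1 * G1 => comp p.1 p.2)} }.

Section TwoGroupDefs.
Variable G : TwoGroup.

Definition inE (e : G1 G) : Prop := src e = e0 G.

Definition actE (x : G0 G) (e : G1 G) : G1 G :=
  m1 (m1 (idm x) e) (idm (i0 x)).

Variables (X : topologicalType) (I : choiceType) (U : I -> set X).

(* The maps
   x_ij : U_ij -> G0 and e_ijk : U_ijk -> E are represented by functions on
   all of X whose restrictions to U_ij (resp. U_ijk) are continuous (and,
   for e, take values in E = Ker s there); only these restrictions matter. *)
Definition is_cocycle (x : I -> I -> X -> G0 G) (e : I -> I -> I -> X -> G1 G)
  : Prop :=
  [/\ (forall i j, {within U i `&` U j, continuous (x i j)}),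
      (forall i j k, {within U i `&` U j `&` U k, continuous (e i j k)}),
      (forall i j k v, (U i `&` U j `&` U k) v -> inE (e i j k v)),
      (forall i j k v, (U i `&` U j `&` U k) v ->
         m0 (m0 (tgt (e i j k v)) (x i j v)) (x j k v) = x i k v) &
      (forall i j k l v, (U i `&` U j `&` U k `&` U l) v ->
         m1 (e i k l v) (e i j k v) = m1 (e i j l v) (actE (x i j v) (e j k l v)))].

Record cocycle := Cocycle {
  cx : I -> I -> X -> G0 G;
  ce : I -> I -> I -> X -> G1 G;
  cocycleP : is_cocycle cx ce }.

Definition cohomologous (c c' : cocycle) : Prop :=
  exists (a : I -> X -> G0 G) (d : I -> I -> X -> G1 G),
  [/\ (forall i, {within U i, continuous (a i)}),
      (forall i j, {within U i `&` U j, continuous (d i j)}),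
      (forall i j v, (U i `&` U j) v -> inE (d i j v)),
      (forall i j v, (U i `&` U j) v ->
         cx c' i j v = m0 (m0 (m0 (a i v) (tgt (d i j v))) (cx c i j v)) (i0 (a j v))) &
      (forall i j k v, (U i `&` U j `&` U k) v ->
         ce c' i j k v = actE (a i v)
           (m1 (m1 (m1 (d i k v) (ce c i j k v))
                   (actE (cx c i j v) (i1 (d j k v))))
               (i1 (d i j v))))].

Definition P0fam (i : I) : topologicalType :=
  Topological.clone (set_type (U i) * G0 G)%type _.
Definition P1fam (ij : I * I) : topologicalType :=
  Topological.clone (set_type (U ij.1 `&` U ij.2) * G1 G)%type _.
Definition P0 : topologicalType := {i : I & P0fam i}.
Definition P1 : topologicalType := {ij : (I * I)%type & P1fam ij}.

Definition resl (A B : set X) (w : set_type (A `&` B)) : set_type A :=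
  exist _ (val w) (mem_set (set_valP w).1).
Definition resr (A B : set X) (w : set_type (A `&` B)) : set_type B :=
  exist _ (val w) (mem_set (set_valP w).2).

Definition pi0 (p : P0) : X := val (projT2 p).1.
Definition pi1 (a : P1) : X := val (projT2 a).1.

Definition srcP (a : P1) : P0 :=
  existT P0fam (projT1 a).1 (resl (projT2 a).1, src (projT2 a).2).

Definition tgtP (c : cocycle) (a : P1) : P0 :=
  existT P0fam (projT1 a).2
    (resr (projT2 a).1,
     m0 (i0 (cx c (projT1 a).1 (projT1 a).2 (pi1 a))) (tgt (projT2 a).2)).

Definition compP (c : cocycle) (a b r : P1) : Prop :=
  tgtP c a = srcP b /\
  exists i j k (v : X) (w1 : set_type (U i `&` U j)) (w2 : set_type (U j `&` U k))
         (w3 : set_type (U i `&` U k)) (g h : G1 G),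
  [/\ val w1 = v /\ val w2 = v /\ val w3 = v,
      a = existT P1fam (i, j) (w1, g),
      b = existT P1fam (j, k) (w2, h) &
      r = existT P1fam (i, k)
            (w3, m1 (ce c i j k v) (comp g (m1 (idm (cx c i j v)) h)))].

Definition act0 (p : P0) (y : G0 G) : P0 :=
  existT P0fam (projT1 p) ((projT2 p).1, m0 (projT2 p).2 y).
Definition act1 (a : P1) (g : G1 G) : P1 :=
  existT P1fam (projT1 a) ((projT2 a).1, m1 (projT2 a).2 g).

Definition bundle_morphism (c c' : cocycle) (f0 : P0 -> P0) (f1 : P1 -> P1)
  : Prop :=
  (continuous f0 /\ continuous f1) /\
  ((forall a, srcP (f1 a) = f0 (srcP a)) /\
   (forall a, tgtP c' (f1 a) = f0 (tgtP c a)) /\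
   (forall a b r, compP c a b r -> compP c' (f1 a) (f1 b) (f1 r))) /\
  ((forall p y, f0 (act0 p y) = act0 (f0 p) y) /\
   (forall a g, f1 (act1 a g) = act1 (f1 a) g)) /\
  ((forall p, pi0 (f0 p) = pi0 p) /\ (forall a, pi1 (f1 a) = pi1 a)).

End TwoGroupDefs.

From Pilot Require Import Defs.
From HB Require Import structures.
From mathcomp Require Import all_boot all_algebra.
From mathcomp Require Import all_classical all_reals all_analysis.

(* A cohomology (a, d) from c to c' acts on P_c chartwise:
   (v, y)_i |-> (v, a_i(v) y)_i and (v, g)_ij |-> (v, 1_{a_i(v)} d_ij(v) g)_ij.
   Compatibility with composition reduces, via g * h = g 1_{t g}^-1 h, to the
   Peiffer identity: Ker s and Ker t commute in G_1.
   Conversely, by equivariance a bundle morphism f is determined by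
   f (v, 1)_i = (v, b_i(v))_K and f (v, 1)_ij = (v, phi_ij(v))_KL, where the charts
   K and L of the images need not be i and j but are locally constant.
   Transporting back along the transition data of c' gives
   a_i = x'_iK b_i and d_ij = 1_{a_i}^-1 e'_ijL^-1 e'_iKL 1_{x'_iK} phi_ij; the
   relations between (a, d), c and c' follow from f (v, 1_{x_ij})_ij * f (v, 1)_jk
   = f ((v, 1_{x_ij})_ij * (v, 1)_jk) together with the cocycle identities of c'. *)

Set Implicit Arguments.
Unset Strict Implicit.
Unset Printing Implicit Defensive.

Local Open Scope classical_set_scope.

Section TopGroupTheory.
Variables (T : topologicalType) (mul : T -> T -> T) (inv : T -> T) (one : T).
Hypothesis tgT : isTopGroup mul inv one.

Lemma tg_mulgK x y : mul (mul y x) (inv x) = y.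
Proof. by rewrite -(tg_assoc tgT) (tg_mulgV tgT) (tg_mulg1 tgT). Qed.

Lemma tg_mulgKV x y : mul (mul y (inv x)) x = y.
Proof. by rewrite -(tg_assoc tgT) (tg_mulVg tgT) (tg_mulg1 tgT). Qed.

Lemma tg_mulgI x : injective (mul x).
Proof.
move=> y z eq_xy_xz.
by rewrite -[y](tg_mul1g tgT) -(tg_mulVg tgT x) -(tg_assoc tgT) eq_xy_xz
  (tg_assoc tgT) (tg_mulVg tgT) (tg_mul1g tgT).
Qed.

Lemma tg_mulIg x : injective (mul^~ x).
Proof. by move=> y z /= eq_yx_zx; rewrite -[y](tg_mulgK x) eq_yx_zx tg_mulgK. Qed.

Lemma tg_invg_eq x y : mul x y = one -> inv x = y.
Proof. by move=> xy1; apply: (@tg_mulgI x); rewrite (tg_mulgV tgT). Qed.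

Lemma tg_invgK : involutive inv.
Proof. by move=> x; apply: tg_invg_eq; rewrite (tg_mulVg tgT). Qed.

Lemma tg_invMg x y : inv (mul x y) = mul (inv y) (inv x).
Proof. by apply: tg_invg_eq; rewrite (tg_assoc tgT) tg_mulgK (tg_mulgV tgT). Qed.

Lemma tg_invg1 : inv one = one.
Proof. by apply: tg_invg_eq; rewrite (tg_mul1g tgT). Qed.

Lemma tg_mul_continuous (Z : topologicalType) (f g : Z -> T) z :
  {for z, continuous f} -> {for z, continuous g} ->
  {for z, continuous (fun w => mul (f w) (g w))}.
Proof.
move=> cf cg; have mul_cont := tg_mul_cont tgT.
exact: (@continuous_comp _ _ _ (fun w => (f w, g w)) (fun p => mul p.1 p.2) z
  (cvg_pair cf cg) (mul_cont _)).
Qed.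

Lemma tg_inv_continuous (Z : topologicalType) (f : Z -> T) z :
  {for z, continuous f} -> {for z, continuous (fun w => inv (f w))}.
Proof. by move=> cf; apply: continuous_comp cf _; exact: (tg_inv_cont tgT). Qed.

End TopGroupTheory.

Section HomTheory.
Variables (A B : topologicalType).
Variables (mA : A -> A -> A) (iA : A -> A) (oA : A).
Variables (mB : B -> B -> B) (iB : B -> B) (oB : B).
Hypotheses (tgA : isTopGroup mA iA oA) (tgB : isTopGroup mB iB oB).
Variables (f : A -> B) (f_hom : is_hom mA mB f).

Lemma hom_one : f oA = oB.
Proof.
apply: (@tg_mulgI _ _ _ _ tgB (f oA)).
by rewrite -f_hom (tg_mul1g tgA) (tg_mulg1 tgB).
Qed.

Lemma hom_inv x : f (iA x) = iB (f x).
Proof. by apply/esym/(tg_invg_eq tgB); rewrite -f_hom (tg_mulgV tgA) hom_one. Qed.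

End HomTheory.

Section TwoGroupTheory.
Variable G : TwoGroup.
Let tg0 := G0_topgroup G.
Let tg1 := G1_topgroup G.

Lemma m0A : associative (@m0 G). Proof. exact: tg_assoc tg0. Qed.
Lemma m01l : left_id (e0 G) (@m0 G). Proof. exact: tg_mul1g tg0. Qed.
Lemma m01r : right_id (e0 G) (@m0 G). Proof. exact: tg_mulg1 tg0. Qed.
Lemma m0Vl : left_inverse (e0 G) (@i0 G) (@m0 G). Proof. exact: tg_mulVg tg0. Qed.
Lemma m0Vr : right_inverse (e0 G) (@i0 G) (@m0 G). Proof. exact: tg_mulgV tg0. Qed.
Lemma m0K (x y : G0 G) : m0 (m0 y x) (i0 x) = y. Proof. exact: tg_mulgK tg0 x y. Qed.
Lemma m0KV (x y : G0 G) : m0 (m0 y (i0 x)) x = y. Proof. exact: tg_mulgKV tg0 x y. Qed.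
Lemma i0K : involutive (@i0 G). Proof. exact: tg_invgK tg0. Qed.
Lemma i0M (x y : G0 G) : i0 (m0 x y) = m0 (i0 y) (i0 x). Proof. exact: tg_invMg tg0 x y. Qed.
Lemma i01 : i0 (e0 G) = e0 G. Proof. exact: tg_invg1 tg0. Qed.

Lemma m1A : associative (@m1 G). Proof. exact: tg_assoc tg1. Qed.
Lemma m11l : left_id (e1 G) (@m1 G). Proof. exact: tg_mul1g tg1. Qed.
Lemma m11r : right_id (e1 G) (@m1 G). Proof. exact: tg_mulg1 tg1. Qed.
Lemma m1Vl : left_inverse (e1 G) (@i1 G) (@m1 G). Proof. exact: tg_mulVg tg1. Qed.
Lemma m1Vr : right_inverse (e1 G) (@i1 G) (@m1 G). Proof. exact: tg_mulgV tg1. Qed.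
Lemma m1K (x y : G1 G) : m1 (m1 y x) (i1 x) = y. Proof. exact: tg_mulgK tg1 x y. Qed.
Lemma m1KV (x y : G1 G) : m1 (m1 y (i1 x)) x = y. Proof. exact: tg_mulgKV tg1 x y. Qed.
Lemma i1K : involutive (@i1 G). Proof. exact: tg_invgK tg1. Qed.
Lemma i1M (x y : G1 G) : i1 (m1 x y) = m1 (i1 y) (i1 x). Proof. exact: tg_invMg tg1 x y. Qed.
Lemma i11 : i1 (e1 G) = e1 G. Proof. exact: tg_invg1 tg1. Qed.

Lemma srcM (g h : G1 G) : src (m1 g h) = m0 (src g) (src h). Proof. exact: src_hom. Qed.
Lemma src1 : src (e1 G) = e0 G. Proof. exact: (hom_one tg1 tg0 (@src_hom G)). Qed.
Lemma srcV (g : G1 G) : src (i1 g) = i0 (src g).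
Proof. exact: (hom_inv tg1 tg0 (@src_hom G)). Qed.
Lemma tgtM (g h : G1 G) : tgt (m1 g h) = m0 (tgt g) (tgt h). Proof. exact: tgt_hom. Qed.
Lemma tgt1 : tgt (e1 G) = e0 G. Proof. exact: (hom_one tg1 tg0 (@tgt_hom G)). Qed.
Lemma tgtV (g : G1 G) : tgt (i1 g) = i0 (tgt g).
Proof. exact: (hom_inv tg1 tg0 (@tgt_hom G)). Qed.
Lemma idmM (x y : G0 G) : idm (m0 x y) = m1 (idm x) (idm y). Proof. exact: idm_hom. Qed.
Lemma idm1 : idm (e0 G) = e1 G. Proof. exact: (hom_one tg0 tg1 (@idm_hom G)). Qed.
Lemma idmV (x : G0 G) : idm (i0 x) = i1 (idm x).
Proof. exact: (hom_inv tg0 tg1 (@idm_hom G)). Qed.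

End TwoGroupTheory.

Ltac g1simpl := repeat progress rewrite ?idmM ?idmV ?idm1 ?i1M ?i1K ?i11
  ?m1A ?m1K ?m1KV ?m1Vr ?m1Vl ?m11l ?m11r.
Ltac g0simpl := repeat progress rewrite ?i0M ?i0K ?i01
  ?m0A ?m0K ?m0KV ?m0Vr ?m0Vl ?m01l ?m01r.
Ltac hom_push := repeat progress rewrite ?srcM ?srcV ?src1 ?src_idm
  ?tgtM ?tgtV ?tgt1 ?tgt_idm.

Section Peiffer.
Variable G : TwoGroup.

Lemma compE (g h : G1 G) : tgt g = src h ->
  Defs.comp g h = m1 (m1 g (i1 (idm (tgt g)))) h.
Proof.
move=> tg_sh; set k := m1 (i1 (idm (tgt g))) h.
have sk : src k = e0 G by hom_push; rewrite tg_sh m0Vl.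
have -> : Defs.comp g h = Defs.comp (m1 g (e1 G)) (m1 (idm (tgt g)) k).
  by rewrite m11r m1A m1Vr m11l.
by rewrite comp_hom ?src_idm ?tgt1 ?sk // comp_idmr -m1A -idm1 -sk comp_idml.
Qed.

Lemma peiffer (a b : G1 G) : src a = e0 G -> tgt b = e0 G -> m1 a b = m1 b a.
Proof.
move=> sa tb.
have b1 : Defs.comp b (e1 G) = b by rewrite -idm1 -tb comp_idmr.
have a1 : Defs.comp (e1 G) a = a by rewrite -idm1 -sa comp_idml.
have tb_s1 : tgt b = src (e1 G) by rewrite tb src1.
have t1_sa : tgt (e1 G) = src a by rewrite tgt1 sa.
have ba := comp_hom tb_s1 t1_sa; have ab := comp_hom t1_sa tb_s1.
rewrite m11r m11l b1 a1 in ba; rewrite m11l m11r a1 b1 in ab.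
by rewrite -ab ba.
Qed.

Lemma peiffer_shift (phi Y : G1 G) : src Y = e0 G ->
  m1 (m1 (m1 phi (i1 (idm (tgt phi)))) Y) (idm (tgt phi)) = m1 Y phi.
Proof.
move=> sY; have tk : tgt (m1 phi (i1 (idm (tgt phi)))) = e0 G.
  by hom_push; rewrite m0Vr.
by rewrite -(peiffer sY tk) -m1A m1KV.
Qed.

Lemma actE_tgt (e f : G1 G) : src e = e0 G -> src f = e0 G ->
  actE (tgt e) f = m1 (m1 e f) (i1 e).
Proof.
move=> se sf; rewrite /actE idmV.
set k := m1 (m1 (idm (tgt e)) f) (i1 (idm (tgt e))).
have sk : src k = e0 G by rewrite /k; hom_push; rewrite sf m01r m0Vr.
apply: (@tg_mulIg _ _ _ _ (G1_topgroup G) e); rewrite /= m1KV -(peiffer_shift e sk).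
by rewrite /k; g1simpl.
Qed.

End Peiffer.

Section GaugeAlgebra.
Variable G : TwoGroup.
Implicit Types (a x y : G0 G) (f g h phi : G1 G).

Lemma gauge_comp ai aj dij dik djk xij xij' eijk eijk' g h :
  src dij = e0 G -> src dik = e0 G -> src djk = e0 G ->
  xij' = m0 (m0 (m0 ai (tgt dij)) xij) (i0 aj) ->
  eijk' = actE ai (m1 (m1 (m1 dik eijk) (actE xij (i1 djk))) (i1 dij)) ->
  tgt g = src (m1 (idm xij) h) ->
  m1 (m1 (idm ai) dik) (m1 eijk (Defs.comp g (m1 (idm xij) h))) =
  m1 eijk' (Defs.comp (m1 (m1 (idm ai) dij) g)
                      (m1 (idm xij') (m1 (m1 (idm aj) djk) h))).
Proof.
move=> sij sik sjk -> -> tg_s.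
rewrite compE // compE; last by hom_push; rewrite sjk tg_s; hom_push; g0simpl.
rewrite /actE; hom_push; g1simpl.
set k := m1 (m1 (idm xij) (i1 djk)) (i1 (idm xij)).
have sk : src k = e0 G by rewrite /k; hom_push; rewrite sjk; g0simpl.
have tg' : tgt (m1 g (i1 (idm (tgt g)))) = e0 G by hom_push; g0simpl.
have := congr1 (m1 (m1 (m1 (idm ai) dik) eijk)) (peiffer sk tg').
by rewrite /k; g1simpl => ->; g1simpl.
Qed.

Definition pullback_arrow a f f' (y : G0 G) phi : G1 G :=
  m1 (m1 (m1 (m1 (i1 (idm a)) (i1 f)) f') (idm y)) phi.

Lemma pullback_arrow_src a b y f f' phi :
  src phi = b -> a = m0 y b -> src f = e0 G -> src f' = e0 G ->
  src (pullback_arrow a f f' y phi) = e0 G.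
Proof.
by move=> sp -> sf sf'; rewrite /pullback_arrow; hom_push; rewrite sp sf sf'; g0simpl.
Qed.

Lemma pullback_cx ai bj xij yij yiK yKL yiL yjL fijL fiKL phi :
  tgt phi = m0 (m0 yKL bj) (i0 xij) ->
  m0 (m0 (tgt fiKL) yiK) yKL = yiL ->
  m0 (m0 (tgt fijL) yij) yjL = yiL ->
  yij = m0 (m0 (m0 ai (tgt (pullback_arrow ai fijL fiKL yiK phi))) xij)
           (i0 (m0 yjL bj)).
Proof.
move=> tp cxKL cxjL.
have eKL : yKL = m0 (m0 (i0 yiK) (i0 (tgt fiKL))) yiL by rewrite -cxKL; g0simpl.
have ejL : yjL = m0 (m0 (i0 yij) (i0 (tgt fijL))) yiL by rewrite -cxjL; g0simpl.
by rewrite /pullback_arrow; hom_push; rewrite tp eKL ejL; g0simpl.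
Qed.

Lemma pullback_comp_conj bj xij yKL eijk fKLM phiij phiik phijk z :
  tgt phiij = m0 (m0 yKL bj) (i0 xij) -> src phijk = bj ->
  m1 phiik (m1 eijk (idm xij)) =
    m1 fKLM (Defs.comp (m1 phiij (idm xij)) (m1 (idm yKL) phijk)) ->
  src z = e0 G ->
  m1 (m1 (m1 (m1 (m1 (m1 (m1 phiik eijk) (idm xij)) (i1 phijk)) z) (idm bj))
      (i1 (idm xij))) (i1 phiij) =
  m1 (m1 (m1 fKLM (idm yKL)) z) (i1 (idm yKL)).
Proof.
move=> tij sjk comp_ijk sz.
have ijk : m1 (m1 phiik eijk) (idm xij) =
    m1 (m1 (m1 (m1 fKLM phiij) (idm xij)) (i1 (idm bj))) phijk.
  rewrite -m1A comp_ijk compE; last by hom_push; rewrite tij sjk; g0simpl.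
  by hom_push; rewrite tij; g1simpl.
rewrite ijk; g1simpl.
set w := m1 (m1 (idm yKL) z) (i1 (idm yKL)).
have sw : src w = e0 G by rewrite /w; hom_push; rewrite sz; g0simpl.
have := congr1 (m1 fKLM) (peiffer_shift phiij sw).
by rewrite tij /w; g1simpl => ->; g1simpl.
Qed.

Lemma chart_change_ce yij yiK yKL yiL yjL fijk fijL fiKL fikM fiKM fKLM fjkM fjLM fiLM
    fijM :
  m0 (m0 (tgt fiKL) yiK) yKL = yiL ->
  m0 (m0 (tgt fijL) yij) yjL = yiL ->
  m1 fiLM fiKL = m1 fiKM (actE yiK fKLM) ->
  m1 fiLM fijL = m1 fijM (actE yij fjLM) ->
  m1 fikM fijk = m1 fijM (actE yij fjkM) ->
  src fiKL = e0 G -> src fijL = e0 G -> src fjLM = e0 G -> src fjkM = e0 G ->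
  m1 (m1 (m1 (m1 (m1 (m1 (m1 (m1 (m1 (m1 (m1 (m1 (i1 fikM) fiKM) (idm yiK)) fKLM)
    (idm yKL)) (i1 (idm yjL))) (i1 fjLM)) fjkM) (idm yjL)) (i1 (idm yKL)))
    (i1 (idm yiK))) (i1 fiKL)) fijL = fijk.
Proof.
move=> cxKL cxjL ceKL cejL cejk sKL sjL sjLM sjkM.
have -> : yKL = m0 (m0 (i0 yiK) (i0 (tgt fiKL))) yiL by rewrite -cxKL; g0simpl.
have -> : yjL = m0 (m0 (i0 yij) (i0 (tgt fijL))) yiL by rewrite -cxjL; g0simpl.
have -> : fKLM = m1 (m1 (m1 (i1 (idm yiK)) (i1 fiKM)) (m1 fiLM fiKL)) (idm yiK).
  by rewrite ceKL /actE; g1simpl.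
g1simpl.
set F := m1 (m1 (m1 (idm yij) (i1 fjLM)) fjkM) (i1 (idm yij)).
have sF : src F = e0 G by rewrite /F; hom_push; rewrite sjLM sjkM; g0simpl.
have := congr1 (m1 (m1 (m1 (m1 (i1 fikM) fiLM) fiKL) (i1 (idm (tgt fiKL)))))
  (actE_tgt sjL sF).
rewrite /actE /F idmV; g1simpl => ->.
set Y := m1 (m1 fijL F) (i1 fijL).
have sY : src Y = e0 G by rewrite /Y /F; hom_push; rewrite sjL sjLM sjkM; g0simpl.
have := congr1 (m1 (m1 (i1 fikM) fiLM)) (peiffer_shift fiKL sY).
rewrite /Y /F; g1simpl => ->; g1simpl.
have -> : fiLM = m1 (m1 fijM (actE yij fjLM)) (i1 fijL) by rewrite -cejL; g1simpl.
have -> : fijk = m1 (i1 fikM) (m1 fijM (actE yij fjkM)) by rewrite -cejk; g1simpl.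
by rewrite /actE; g1simpl.
Qed.

Lemma pullback_ce ai bj xij yij yiK yKL yiL yjL eijk fijk fijL fiKL fikM fiKM fKLM fjkM
    fjLM fiLM fijM phiij phiik phijk :
  tgt phiij = m0 (m0 yKL bj) (i0 xij) ->
  src phijk = bj ->
  m1 phiik (m1 eijk (idm xij)) =
    m1 fKLM (Defs.comp (m1 phiij (idm xij)) (m1 (idm yKL) phijk)) ->
  m0 (m0 (tgt fiKL) yiK) yKL = yiL ->
  m0 (m0 (tgt fijL) yij) yjL = yiL ->
  m1 fiLM fiKL = m1 fiKM (actE yiK fKLM) ->
  m1 fiLM fijL = m1 fijM (actE yij fjLM) ->
  m1 fikM fijk = m1 fijM (actE yij fjkM) ->
  src fiKL = e0 G -> src fijL = e0 G -> src fjLM = e0 G -> src fjkM = e0 G ->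
  fijk = actE ai (m1 (m1 (m1 (pullback_arrow ai fikM fiKM yiK phiik) eijk)
           (actE xij (i1 (pullback_arrow (m0 yjL bj) fjkM fjLM yjL phijk))))
           (i1 (pullback_arrow ai fijL fiKL yiK phiij))).
Proof.
move=> tij sjk comp_ijk cxKL cxjL ceKL cejL cejk sKL sjL sjLM sjkM.
rewrite /pullback_arrow /actE; g1simpl.
set z := m1 (m1 (m1 (i1 (idm yjL)) (i1 fjLM)) fjkM) (idm yjL).
have sz : src z = e0 G by rewrite /z; hom_push; rewrite sjLM sjkM; g0simpl.
have := congr1 (m1 (m1 (m1 (i1 fikM) fiKM) (idm yiK)))
  (pullback_comp_conj tij sjk comp_ijk sz).
rewrite /z; g1simpl => ->.
by rewrite (chart_change_ce cxKL cxjL ceKL cejL cejk).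
Qed.

End GaugeAlgebra.

Lemma set_val_continuous (T : topologicalType) (A : set T) :
  continuous (fun w : set_type A => val w).
Proof. exact: initial_continuous. Qed.

Lemma within_open_continuous_val (T Y : topologicalType) (A B : set T)
    (g : T -> Y) (w : set_type A) :
  open B -> {within B, continuous g} -> B (val w) ->
  {for w, continuous (fun w : set_type A => g (val w))}.
Proof.
move=> oB cg Bw; apply: continuous_comp; first exact: set_val_continuous.
by move: cg; rewrite continuous_open_subspace // => /(_ (val w)); apply; rewrite inE.
Qed.

Lemma pair_continuous (Z A B : topologicalType) (f : Z -> A) (g : Z -> B) z :
  {for z, continuous f} -> {for z, continuous g} ->
  {for z, continuous (fun w => (f w, g w))}.
Proof. exact: cvg_pair. Qed.

Lemma near_eq_continuous (Z T : topologicalType) (f g : Z -> T) z :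
  (\forall w \near z, f w = g w) -> {for z, continuous g} -> {for z, continuous f}.
Proof.
move=> fg cg; have fgz : f z = g z := nbhs_singleton fg.
rewrite /prop_for /continuous_at fgz.
by apply: cvg_trans cg; apply: near_eq_cvg; apply: filterS fg => w ->.
Qed.

Lemma near_projT1 (J : choiceType) (T : J -> topologicalType) (Z : topologicalType)
    (h : Z -> {i : J & T i}) z :
  {for z, continuous h} -> \forall w \near z, projT1 (h w) = projT1 (h z).
Proof.
move=> ch; have oS : open (existT T (projT1 (h z)) @` setT).
  exact/existT_open_map/openT.
have Sz : (existT T (projT1 (h z)) @` setT) (h z) by case: (h z) => i t; exists t.
have := ch _ (open_nbhs_nbhs (conj oS Sz)).
by rewrite /= nbhs_simpl /=; apply: filterS => w [t _ <-].
Qed.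

Lemma projT2_snd_continuous (J : choiceType) (T : J -> topologicalType)
    (Y : topologicalType) :
  continuous (fun p : {i : J & (T i * Y)%type} => (projT2 p).2).
Proof.
have -> : (fun p : {i : J & (T i * Y)%type} => (projT2 p).2) =
  unstable.sigT_fun (fun i (z : (T i * Y)%type) => z.2) by [].
by apply: sigT_continuous => i z; exact: cvg_snd.
Qed.

Section CocycleFacts.
Variables (G : TwoGroup) (X : topologicalType) (I : choiceType) (U : I -> set X).
Variable c : cocycle G U.

Lemma cocycle_cx_cont i j : {within U i `&` U j, continuous (cx c i j)}.
Proof. by case: (cocycleP c). Qed.

Lemma cocycle_ce_cont i j k : {within U i `&` U j `&` U k, continuous (ce c i j k)}.
Proof. by case: (cocycleP c). Qed.

Lemma cocycle_ce_src i j k v : (U i `&` U j `&` U k) v -> src (ce c i j k v) = e0 G.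
Proof. by case: (cocycleP c) => _ _ + _ _; apply. Qed.

Lemma cocycle_cxM i j k v : (U i `&` U j `&` U k) v ->
  m0 (m0 (tgt (ce c i j k v)) (cx c i j v)) (cx c j k v) = cx c i k v.
Proof. by case: (cocycleP c) => _ _ _ + _; apply. Qed.

Lemma cocycle_ceM i j k l v : (U i `&` U j `&` U k `&` U l) v ->
  m1 (ce c i k l v) (ce c i j k v) =
  m1 (ce c i j l v) (actE (cx c i j v) (ce c j k l v)).
Proof. by case: (cocycleP c) => _ _ _ _; apply. Qed.

End CocycleFacts.

Section CohomologousMorphism.
Variables (G : TwoGroup) (X : topologicalType) (I : choiceType) (U : I -> set X).
Hypothesis U_open : forall i, open (U i).
Variables (c c' : cocycle G U) (a : I -> X -> G0 G) (d : I -> I -> X -> G1 G).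
Hypothesis a_cont : forall i, {within U i, continuous (a i)}.
Hypothesis d_cont : forall i j, {within U i `&` U j, continuous (d i j)}.
Hypothesis d_src : forall i j v, (U i `&` U j) v -> Defs.inE (d i j v).
Hypothesis cx_cohom : forall i j v, (U i `&` U j) v ->
  cx c' i j v = m0 (m0 (m0 (a i v) (tgt (d i j v))) (cx c i j v)) (i0 (a j v)).
Hypothesis ce_cohom : forall i j k v, (U i `&` U j `&` U k) v ->
  ce c' i j k v = actE (a i v)
    (m1 (m1 (m1 (d i k v) (ce c i j k v)) (actE (cx c i j v) (i1 (d j k v))))
        (i1 (d i j v))).

Definition gauge_map0 (p : P0 G U) : P0 G U :=
  existT (P0fam G U) (projT1 p) ((projT2 p).1, m0 (a (projT1 p) (pi0 p)) (projT2 p).2).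

Definition gauge_map1 (q : P1 G U) : P1 G U :=
  existT (P1fam G U) (projT1 q) ((projT2 q).1,
    m1 (m1 (idm (a (projT1 q).1 (pi1 q))) (d (projT1 q).1 (projT1 q).2 (pi1 q)))
       (projT2 q).2).

Lemma gauge_map0_cont : continuous gauge_map0.
Proof.
have -> : gauge_map0 = unstable.sigT_fun (fun i (z : P0fam G U i) =>
    existT (P0fam G U) i (z.1, m0 (a i (val z.1)) z.2)).
  by apply: funext => -[i z].
apply: sigT_continuous => i z; apply: continuous_comp (existT_continuous _ _).
apply: pair_continuous; first exact: cvg_fst.
apply: (tg_mul_continuous (G0_topgroup G)); last exact: cvg_snd.
apply: (@continuous_comp _ _ _ fst (fun w : set_type (U i) => a i (val w))).
  exact: cvg_fst.
exact: within_open_continuous_val (U_open i) (@a_cont i) (set_valP z.1).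
Qed.

Lemma gauge_map1_cont : continuous gauge_map1.
Proof.
have -> : gauge_map1 = unstable.sigT_fun (fun ij (z : P1fam G U ij) =>
    existT (P1fam G U) ij
      (z.1, m1 (m1 (idm (a ij.1 (val z.1))) (d ij.1 ij.2 (val z.1))) z.2)).
  by apply: funext => -[ij z].
apply: sigT_continuous => -[i j] z; apply: continuous_comp (existT_continuous _ _).
apply: pair_continuous; first exact: cvg_fst.
have [Ui Uj] : (U i `&` U j) (val z.1) by exact: set_valP.
apply: (tg_mul_continuous (G1_topgroup G)); last exact: cvg_snd.
apply: (tg_mul_continuous (G1_topgroup G)).
  have ca : {for z, continuous (fun w : P1fam G U (i, j) => a i (val w.1))}.
    apply: (@continuous_comp _ _ _ fst (fun w : set_type (U i `&` U j) => a i (val w))).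
      exact: cvg_fst.
    exact: within_open_continuous_val (U_open i) (@a_cont i) Ui.
  exact: continuous_comp ca (@idm_cont G _).
apply: (@continuous_comp _ _ _ fst (fun w : set_type (U i `&` U j) => d i j (val w))).
  exact: cvg_fst.
exact: (within_open_continuous_val (openI (U_open i) (U_open j)) (@d_cont i j)
  (set_valP z.1)).
Qed.

Lemma gauge_map_src q : srcP (gauge_map1 q) = gauge_map0 (srcP q).
Proof.
case: q => -[i j] [w h]; rewrite /srcP /gauge_map0 /gauge_map1 /pi0 /pi1 /=.
by hom_push; rewrite (d_src (set_valP w)) m01r.
Qed.

Lemma gauge_map_tgt q : tgtP c' (gauge_map1 q) = gauge_map0 (tgtP c q).
Proof.
case: q => -[i j] [w h]; rewrite /tgtP /gauge_map0 /gauge_map1 /pi0 /pi1 /=.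
by rewrite (cx_cohom (set_valP w)); hom_push; g0simpl.
Qed.

Lemma gauge_map_act0 p y : gauge_map0 (act0 p y) = act0 (gauge_map0 p) y.
Proof. by case: p => i [w z]; rewrite /gauge_map0 /act0 /pi0 /= m0A. Qed.

Lemma gauge_map_act1 q g : gauge_map1 (act1 q g) = act1 (gauge_map1 q) g.
Proof. by case: q => ij [w z]; rewrite /gauge_map1 /act1 /pi1 /= m1A. Qed.

Lemma gauge_map_comp q1 q2 r :
  compP c q1 q2 r -> compP c' (gauge_map1 q1) (gauge_map1 q2) (gauge_map1 r).
Proof.
case=> t1_s2 [i [j [k [v [w1 [w2 [w3 [g [h [[vw1 [vw2 vw3]] eq1 eq2 eq3]]]]]]]]]].
split; first by rewrite gauge_map_tgt gauge_map_src t1_s2.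
subst q1 q2 r v.
exists i, j, k, (val w1), w1, w2, w3.
exists (m1 (m1 (idm (a i (val w1))) (d i j (val w1))) g).
exists (m1 (m1 (idm (a j (val w1))) (d j k (val w1))) h).
split => //; rewrite /gauge_map1 /pi1 /= ?vw2 ?vw3 //.
apply: (congr1 (fun y => existT (P1fam G U) (i, k) (w3, y))).
have [Ui Uj] := set_valP w1; have := set_valP w2; rewrite vw2 => -[_ Uk].
have Uijk : (U i `&` U j `&` U k) (val w1) by [].
apply: gauge_comp.
- exact: d_src.
- exact: d_src.
- by apply: d_src; rewrite -vw2; exact: set_valP.
- exact: cx_cohom.
- exact: ce_cohom.
- have := congr1 (fun p : P0 G U => (projT2 p).2) t1_s2.
  rewrite /tgtP /srcP /pi1 /= => tg_sh.
  by hom_push; rewrite -tg_sh; g0simpl.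
Qed.

Lemma gauge_bundle_morphism : bundle_morphism c c' gauge_map0 gauge_map1.
Proof.
split; first by split; [exact: gauge_map0_cont | exact: gauge_map1_cont].
split.
  by split; [exact: gauge_map_src | split; [exact: gauge_map_tgt | exact: gauge_map_comp]].
split; first by split; [exact: gauge_map_act0 | exact: gauge_map_act1].
by split; case.
Qed.

End CohomologousMorphism.

Lemma valL_val (T V : Type) (v : V) (A : set T) (f : set_type A -> V) (w : set_type A) :
  valL_ v f (val w) = f w.
Proof. by have /(congr1 (fun h => h w)) := valLK v f. Qed.

Lemma valL_within_continuous (T V : topologicalType) (v : V) (A : set T)
    (f : set_type A -> V) :
  continuous f -> {within A, continuous (valL_ v f)}.
Proof. by move=> cf; apply/subspace_sigL_continuousP; rewrite valLK. Qed.

Definition in_set_type (T : Type) (A : set T) v (Av : A v) : set_type A :=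
  exist _ v (mem_set Av).

Section MorphismCohomologous.
Variables (G : TwoGroup) (X : topologicalType) (I : choiceType) (U : I -> set X).
Hypothesis U_open : forall i, open (U i).
Variables (c c' : cocycle G U) (f0 : P0 G U -> P0 G U) (f1 : P1 G U -> P1 G U).
Hypotheses (f0_cont : continuous f0) (f1_cont : continuous f1).
Hypothesis f_src : forall q, srcP (f1 q) = f0 (srcP q).
Hypothesis f_tgt : forall q, tgtP c' (f1 q) = f0 (tgtP c q).
Hypothesis f_comp : forall q1 q2 r, compP c q1 q2 r -> compP c' (f1 q1) (f1 q2) (f1 r).
Hypothesis f_act0 : forall p y, f0 (act0 p y) = act0 (f0 p) y.
Hypothesis f_act1 : forall q g, f1 (act1 q g) = act1 (f1 q) g.
Hypothesis f_pi0 : forall p, pi0 (f0 p) = pi0 p.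
Hypothesis f_pi1 : forall q, pi1 (f1 q) = pi1 q.

Definition unit0 i (w : set_type (U i)) : P0 G U := existT (P0fam G U) i (w, e0 G).
Definition unit1 i j (w : set_type (U i `&` U j)) : P1 G U :=
  existT (P1fam G U) (i, j) (w, e1 G).

Definition chart0 i (w : set_type (U i)) : I := projT1 (f0 (unit0 w)).
Definition coord0 i (w : set_type (U i)) : G0 G := (projT2 (f0 (unit0 w))).2.
Definition charts1 i j (w : set_type (U i `&` U j)) : I * I := projT1 (f1 (unit1 w)).
Definition coord1 i j (w : set_type (U i `&` U j)) : G1 G := (projT2 (f1 (unit1 w))).2.

Lemma f0_unit0 i (w : set_type (U i)) y :
  f0 (existT (P0fam G U) i (w, y)) = act0 (f0 (unit0 w)) y.
Proof. by rewrite -f_act0 /act0 /unit0 /= m01l. Qed.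

Lemma f1_unit1 i j (w : set_type (U i `&` U j)) g :
  f1 (existT (P1fam G U) (i, j) (w, g)) = act1 (f1 (unit1 w)) g.
Proof. by rewrite -f_act1 /act1 /unit1 /= m11l. Qed.

Lemma chart0_mem i (w : set_type (U i)) : U (chart0 w) (val w).
Proof.
rewrite /chart0; have <- : pi0 (f0 (unit0 w)) = val w by rewrite f_pi0.
by case: (f0 (unit0 w)) => K [wK y]; exact: set_valP.
Qed.

Lemma charts1_src i j (w : set_type (U i `&` U j)) (wi : set_type (U i)) :
  val wi = val w -> (charts1 w).1 = chart0 wi.
Proof.
move=> wi_w; have -> : wi = resl w by apply: val_inj.
have := congr1 (@projT1 _ _) (f_src (unit1 w)).
by rewrite /charts1 /chart0 /srcP /unit1 /unit0 /= src1.
Qed.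

Lemma coord1_src i j (w : set_type (U i `&` U j)) (wi : set_type (U i)) :
  val wi = val w -> src (coord1 w) = coord0 wi.
Proof.
move=> wi_w; have -> : wi = resl w by apply: val_inj.
have := congr1 (fun p : P0 G U => (projT2 p).2) (f_src (unit1 w)).
by rewrite /coord1 /coord0 /srcP /unit1 /unit0 /= src1.
Qed.

Lemma charts1_tgt i j (w : set_type (U i `&` U j)) (wj : set_type (U j)) :
  val wj = val w -> (charts1 w).2 = chart0 wj.
Proof.
move=> wj_w; have -> : wj = resr w by apply: val_inj.
have := congr1 (@projT1 _ _) (f_tgt (unit1 w)).
by rewrite /charts1 /chart0 /tgtP /unit1 /= f0_unit0.
Qed.

Lemma coord1_tgt i j (w : set_type (U i `&` U j)) (wi : set_type (U i))
    (wj : set_type (U j)) :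
  val wi = val w -> val wj = val w ->
  tgt (coord1 w) = m0 (m0 (cx c' (chart0 wi) (chart0 wj) (val w)) (coord0 wj))
                      (i0 (cx c i j (val w))).
Proof.
move=> wi_w wj_w; rewrite -(charts1_src wi_w) -(charts1_tgt wj_w).
have -> : wj = resr w by apply: val_inj.
have := congr1 (fun p : P0 G U => (projT2 p).2) (f_tgt (unit1 w)).
rewrite /tgtP /= f0_unit0 /act0 /= f_pi1 /pi1 /= tgt1 m01r => tgt_eq.
by rewrite /charts1 /coord1 /coord0 -m0A -tgt_eq; g0simpl.
Qed.

Lemma compP_unit1 (b : cocycle G U) i j k v (wij : set_type (U i `&` U j))
    (wjk : set_type (U j `&` U k)) (wik : set_type (U i `&` U k)) :
  val wij = v -> val wjk = v -> val wik = v ->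
  compP b (existT (P1fam G U) (i, j) (wij, idm (cx b i j v))) (unit1 wjk)
    (existT (P1fam G U) (i, k) (wik, m1 (ce b i j k v) (idm (cx b i j v)))).
Proof.
move=> vij vjk vik; split.
  rewrite /tgtP /srcP /unit1 /pi1 /= vij tgt_idm m0Vl src1.
  by have -> : resr wij = resl wjk by apply: val_inj; rewrite /= vij vjk.
exists i, j, k, v, wij, wjk, wik, (idm (cx b i j v)), (e1 G); split => //.
have idm_idm := comp_idml (idm (cx b i j v)); rewrite src_idm in idm_idm.
by rewrite m11r idm_idm.
Qed.

Lemma compP_coord (b : cocycle G U) q1 q2 r : compP b q1 q2 r ->
  (projT2 r).2 = m1 (ce b (projT1 q1).1 (projT1 q1).2 (projT1 q2).2 (pi1 q1))
    (Defs.comp (projT2 q1).2 (m1 (idm (cx b (projT1 q1).1 (projT1 q1).2 (pi1 q1)))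
                                 (projT2 q2).2)).
Proof. by case=> _ [i [j [k [v [w1 [w2 [w3 [g [h [[<- _] -> -> ->]]]]]]]]]]. Qed.

Lemma coord1_comp i j k v (wi : set_type (U i)) (wj : set_type (U j))
    (wk : set_type (U k)) (wij : set_type (U i `&` U j))
    (wjk : set_type (U j `&` U k)) (wik : set_type (U i `&` U k)) :
  val wi = v -> val wj = v -> val wk = v ->
  val wij = v -> val wjk = v -> val wik = v ->
  m1 (coord1 wik) (m1 (ce c i j k v) (idm (cx c i j v))) =
  m1 (ce c' (chart0 wi) (chart0 wj) (chart0 wk) v)
     (Defs.comp (m1 (coord1 wij) (idm (cx c i j v)))
                (m1 (idm (cx c' (chart0 wi) (chart0 wj) v)) (coord1 wjk))).
Proof.
move=> vi vj vk vij vjk vik.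
rewrite -(@charts1_src _ _ wij wi) ?vi ?vij // -(@charts1_tgt _ _ wij wj) ?vj ?vij //.
rewrite -(@charts1_tgt _ _ wjk wk) ?vk ?vjk //.
have := compP_coord (f_comp (compP_unit1 c vij vjk vik)).
have pv : val (projT2 (f1 (unit1 wij))).1 = v by rewrite -vij; exact: f_pi1.
by rewrite (f1_unit1 wij (idm _)) (f1_unit1 wik (m1 _ _)) /act1 /pi1 /= pv => ->.
Qed.

Definition gauge_at i (w : set_type (U i)) : G0 G :=
  m0 (cx c' i (chart0 w) (val w)) (coord0 w).
Definition gauge i : X -> G0 G := valL_ (e0 G) (@gauge_at i).

Definition transition_at i j (w : set_type (U i `&` U j)) : G1 G :=
  pullback_arrow (gauge i (val w)) (ce c' i j (charts1 w).2 (val w))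
    (ce c' i (charts1 w).1 (charts1 w).2 (val w)) (cx c' i (charts1 w).1 (val w))
    (coord1 w).
Definition transition i j : X -> G1 G := valL_ (e1 G) (@transition_at i j).

Lemma unit0_cont i : continuous (@unit0 i).
Proof.
move=> w; apply: (@continuous_comp _ _ _ (fun w => (w, e0 G)) (existT (P0fam G U) i)).
  exact: pair_continuous (@cvg_id _ _) (cvg_cst _).
exact: existT_continuous.
Qed.

Lemma unit1_cont i j : continuous (@unit1 i j).
Proof.
move=> w; apply: (@continuous_comp _ _ _ (fun w => (w, e1 G)) (existT (P1fam G U) (i, j))).
  exact: pair_continuous (@cvg_id _ _) (cvg_cst _).
exact: existT_continuous.
Qed.

Lemma coord0_cont i : continuous (@coord0 i).
Proof.
move=> w; apply: (@continuous_comp _ _ _ (f0 \o @unit0 i) (fun p => (projT2 p).2)).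
  exact: continuous_comp (@unit0_cont i w) (@f0_cont _).
exact: projT2_snd_continuous.
Qed.

Lemma coord1_cont i j : continuous (@coord1 i j).
Proof.
move=> w; apply: (@continuous_comp _ _ _ (f1 \o @unit1 i j) (fun p => (projT2 p).2)).
  exact: continuous_comp (@unit1_cont i j w) (@f1_cont _).
exact: projT2_snd_continuous.
Qed.

Lemma gauge_at_cont i : continuous (@gauge_at i).
Proof.
move=> w0.
have chart_near := near_projT1 (continuous_comp (@unit0_cont i w0) (@f0_cont _)).
apply: (@near_eq_continuous _ _ (@gauge_at i)
  (fun w => m0 (cx c' i (chart0 w0) (val w)) (coord0 w)) w0).
  by near=> w; rewrite /gauge_at /chart0 (near chart_near w).
apply: (tg_mul_continuous (G0_topgroup G)); last exact: coord0_cont.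
apply: within_open_continuous_val (@cocycle_cx_cont _ _ _ _ c' i (chart0 w0)) _.
  exact: openI.
by split; [exact: set_valP | exact: chart0_mem].
Unshelve. all: end_near.
Qed.

Lemma gauge_cont i : {within U i, continuous (gauge i)}.
Proof. exact: valL_within_continuous (@gauge_at_cont i). Qed.

Lemma pullback_arrow_continuous (Z : topologicalType) (a y : Z -> G0 G)
    (f f' phi : Z -> G1 G) z :
  {for z, continuous a} -> {for z, continuous f} -> {for z, continuous f'} ->
  {for z, continuous y} -> {for z, continuous phi} ->
  {for z, continuous (fun w => pullback_arrow (a w) (f w) (f' w) (y w) (phi w))}.
Proof.
move=> ca cf cf' cy cphi; rewrite /pullback_arrow.
have cmul := tg_mul_continuous (G1_topgroup G).
have cinv := tg_inv_continuous (G1_topgroup G).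
have cidm (h : Z -> G0 G) :
    {for z, continuous h} -> {for z, continuous (fun w => idm (h w))}.
  by move=> ch; exact: continuous_comp ch (@idm_cont G _).
apply: (cmul); last exact: cphi.
apply: (cmul); last exact: cidm cy.
apply: (cmul); last exact: cf'.
by apply: (cmul); apply: (cinv); [exact: cidm ca | exact: cf].
Qed.

Lemma transition_at_cont i j : continuous (@transition_at i j).
Proof.
move=> w0.
have charts_near := near_projT1 (continuous_comp (@unit1_cont i j w0) (@f1_cont _)).
have [Ui Uj] : (U i `&` U j) (val w0) by exact: set_valP.
have UK : U (charts1 w0).1 (val w0).
  by rewrite (charts1_src (wi := resl w0)) //; exact: chart0_mem.
have UL : U (charts1 w0).2 (val w0).
  by rewrite (charts1_tgt (wj := resr w0)) //; exact: chart0_mem.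
apply: (@near_eq_continuous _ _ (@transition_at i j) (fun w => pullback_arrow
   (gauge i (val w)) (ce c' i j (charts1 w0).2 (val w))
   (ce c' i (charts1 w0).1 (charts1 w0).2 (val w))
   (cx c' i (charts1 w0).1 (val w)) (coord1 w)) w0).
  by near=> w; rewrite /transition_at /charts1 (near charts_near w).
have open3 (k l m : I) : open (U k `&` U l `&` U m) by apply: openI; [apply: openI|].
apply: pullback_arrow_continuous.
- exact: within_open_continuous_val (U_open i) (@gauge_cont i) Ui.
- exact: within_open_continuous_val (open3 _ _ _) (@cocycle_ce_cont _ _ _ _ c' i j _)
    (conj (conj Ui Uj) UL).
- exact: within_open_continuous_val (open3 _ _ _) (@cocycle_ce_cont _ _ _ _ c' i _ _)
    (conj (conj Ui UK) UL).
- exact: within_open_continuous_val (openI _ _) (@cocycle_cx_cont _ _ _ _ c' i _)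
    (conj Ui UK).
- exact: coord1_cont.
Unshelve. all: end_near.
Qed.

Lemma transition_cont i j : {within U i `&` U j, continuous (transition i j)}.
Proof. exact: valL_within_continuous (@transition_at_cont i j). Qed.

Lemma transition_at_src i j (w : set_type (U i `&` U j)) : src (transition_at w) = e0 G.
Proof.
have [Ui Uj] : (U i `&` U j) (val w) by exact: set_valP.
have UK : U (chart0 (resl w)) (val w) := chart0_mem (resl w).
have UL : U (chart0 (resr w)) (val w) := chart0_mem (resr w).
rewrite /transition_at (charts1_src (wi := resl w)) // (charts1_tgt (wj := resr w)) //.
apply: (pullback_arrow_src (b := coord0 (resl w))).
- exact: coord1_src.
- exact: (valL_val _ _ (resl w)).
- by apply: cocycle_ce_src; repeat split.
- by apply: cocycle_ce_src; repeat split.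
Qed.

Lemma transition_at_cx i j (w : set_type (U i `&` U j)) :
  cx c' i j (val w) = m0 (m0 (m0 (gauge i (val w)) (tgt (transition_at w)))
                             (cx c i j (val w))) (i0 (gauge j (val w))).
Proof.
have [Ui Uj] : (U i `&` U j) (val w) by exact: set_valP.
have UK : U (chart0 (resl w)) (val w) := chart0_mem (resl w).
have UL : U (chart0 (resr w)) (val w) := chart0_mem (resr w).
rewrite /transition_at (charts1_src (wi := resl w)) // (charts1_tgt (wj := resr w)) //.
have -> : gauge j (val w) = gauge_at (resr w) := valL_val _ _ (resr w).
rewrite /gauge_at.
apply: pullback_cx.
- by apply: (coord1_tgt (wi := resl w) (wj := resr w)).
- by apply: cocycle_cxM; repeat split.
- by apply: cocycle_cxM; repeat split.
Qed.

Lemma transition_ce i j k v : (U i `&` U j `&` U k) v ->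
  ce c' i j k v = actE (gauge i v)
    (m1 (m1 (m1 (transition i k v) (ce c i j k v))
            (actE (cx c i j v) (i1 (transition j k v))))
        (i1 (transition i j v))).
Proof.
move=> [[Ui Uj] Uk].
pose wi := in_set_type Ui; pose wj := in_set_type Uj; pose wk := in_set_type Uk.
pose wij := in_set_type (conj Ui Uj : (U i `&` U j) v).
pose wjk := in_set_type (conj Uj Uk : (U j `&` U k) v).
pose wik := in_set_type (conj Ui Uk : (U i `&` U k) v).
have UK : U (chart0 wi) v := chart0_mem wi.
have UL : U (chart0 wj) v := chart0_mem wj.
have UM : U (chart0 wk) v := chart0_mem wk.
rewrite /transition (valL_val _ _ wij) (valL_val _ _ wik) (valL_val _ _ wjk).
rewrite /transition_at (charts1_src (w := wij) (wi := wi)) //.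
rewrite (charts1_tgt (w := wij) (wj := wj)) // (charts1_src (w := wik) (wi := wi)) //.
rewrite (charts1_tgt (w := wik) (wj := wk)) // (charts1_src (w := wjk) (wi := wj)) //.
rewrite (charts1_tgt (w := wjk) (wj := wk)) //.
have -> : gauge j (val wjk) = gauge_at wj := valL_val _ _ wj.
apply: (pullback_ce _ (bj := coord0 wj) (yKL := cx c' (chart0 wi) (chart0 wj) v)
                    (yiL := cx c' i (chart0 wj) v)).
- by apply: (coord1_tgt (w := wij) (wi := wi) (wj := wj)).
- by apply: (coord1_src (w := wjk) (wi := wj)).
- by apply: (coord1_comp (wi := wi) (wj := wj) (wk := wk)).
- by apply: cocycle_cxM; repeat split.
- by apply: cocycle_cxM; repeat split.
- by apply: cocycle_ceM; repeat split.
- by apply: cocycle_ceM; repeat split.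
- by apply: cocycle_ceM; repeat split.
- by apply: cocycle_ce_src; repeat split.
- by apply: cocycle_ce_src; repeat split.
- by apply: cocycle_ce_src; repeat split.
- by apply: cocycle_ce_src; repeat split.
Qed.

Lemma morphism_cohomologous : cohomologous c c'.
Proof.
exists gauge, transition; split.
- by move=> i; exact: gauge_cont.
- by move=> i j; exact: transition_cont.
- move=> i j v Uijv; rewrite /Defs.inE -[v]/(val (in_set_type Uijv)) /transition.
  by rewrite valL_val transition_at_src.
- move=> i j v Uijv; rewrite -[v]/(val (in_set_type Uijv)) /transition valL_val.
  exact: transition_at_cx.
- exact: transition_ce.
Qed.

End MorphismCohomologous.

Theorem lemma6 (G : TwoGroup) (X : topologicalType) (I : choiceType)
  (U : I -> set X) (U_open : forall i, open (U i))
  (U_cover : \bigcup_i U i = setT)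
  (c c' : cocycle G U) :
  cohomologous c c' <->
  exists (f0 : P0 G U -> P0 G U) (f1 : P1 G U -> P1 G U),
    bundle_morphism c c' f0 f1.
Proof.
split=> [[a [d [a_cont d_cont d_src cx_cohom ce_cohom]]] | [f0 [f1 f_morph]]].
- exists (gauge_map0 a), (gauge_map1 a d).
  exact: gauge_bundle_morphism.
- case: f_morph => -[f0_cont f1_cont]
    [[f_src [f_tgt f_comp]] [[f_act0 f_act1] [f_pi0 f_pi1]]].
  exact: (morphism_cohomologous U_open f0_cont f1_cont f_src f_tgt f_comp
                                f_act0 f_act1 f_pi0 f_pi1).
Qed.
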